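(* Let $\mathcal G$ be a temporal graph with $n$ vertices and $m$ contacts, considered with strict journeys. Then there exists a happy temporal graph $\mathcal H$ with $n+2m$ vertices and $4m$ edges, together with an (injective) mapping $\sigma:V_{\mathcal G}\to V_{\mathcal H}$, such that for all $u,v\in V_{\mathcal G}$, $(u,v)$ is an arc of the strict reachability graph $\mathcal C(\mathcal G)$ if and only if $(\sigma(u),\sigma(v))$ is an arc of $\mathcal C(\mathcal H)$.
   Context: A temporal graph is a triple $\mathcal G=(V,E,\lambda)$ where $V$ is a finite vertex set, $E$ is a set of undirected edges on $V$, and $\lambda:E\to 2^{\mathbb N}\setminus\{\emptyset\}$ assigns to each edge a nonempty set of presence times. The footprint of $\mathcal G$ is the static graph $(V,E)$. A contact is a pair $(e,t)$ with $e\in E$ and $t\in\lambda(e)$. A journey from $u$ to $v$ is a sequence of contacts $(e_1,t_1),\dots,(e_k,t_k)$, $k\ge 1$, such that $e_1,\dots,e_k$ form a path from $u$ to $v$ in the footprint and $t_1\le t_2\le\dots\le t_k$ (a non-strict journey); it is strict if $t_1<t_2<\dots<t_k$. $\mathcal G$ is proper if $\lambda(e)\cap\lambda(e')=\emptyset$ for any two distinct edges $e,e'$ sharing an endpoint (in a proper graph every journey is strict); simple if $|\lambda(e)|=1$ for every edge $e$; happy if it is both proper and simple. The reachability graph $\mathcal C(\mathcal G)$ (with respect to a chosen journey notion) is the directed graph on $V$ having an arc $(u,v)$, $u\neq v$, if and only if there is a journey from $u$ to $v$. *)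

From HB Require Import structures.
From mathcomp Require Import all_boot.
From mathcomp Require Export finmap.
Set Implicit Arguments. Unset Strict Implicit. Unset Printing Implicit Defensive.
Local Open Scope fset_scope.

(* A temporal graph: vertex set = the finite type V, edge set E (edges are
   2-element subsets of V), and presence times lam e : a nonempty finite set
   of naturals for every edge e \in E (values outside E are irrelevant). *)
Definition is_tgraph (V : finType) (E : {set {set V}})
  (lam : {set V} -> {fset nat}) : Prop :=
  (forall e, e \in E -> #|e| = 2) /\ (forall e, e \in E -> lam e != fset0).

Definition ncontacts (V : finType) (E : {set {set V}})
  (lam : {set V} -> {fset nat}) : nat :=
  (\sum_(e in E) #|` lam e|)%N.

(* strict journey from u to v: a path u = x_0, x_1, ..., x_k = v (k >= 1,
   pairwise distinct vertices) in the footprint, with contact times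
   t_1 < ... < t_k, t_i \in lam {x_(i-1), x_i}. *)
Definition strict_journey (V : finType) (E : {set {set V}})
  (lam : {set V} -> {fset nat}) (u v : V) : Prop :=
  exists (p : seq V) (ts : seq nat),
    size ts = size p /\ (0 < size p)%N /\ uniq (u :: p) /\ last u p = v /\
        (forall i, (i < size p)%N ->
           [set nth u (u :: p) i; nth u p i] \in E /\
           nth 0%N ts i \in lam [set nth u (u :: p) i; nth u p i]) /\
        sorted ltn ts.

Definition reach_arc (V : finType) (E : {set {set V}})
  (lam : {set V} -> {fset nat}) (u v : V) : Prop :=
  u != v /\ strict_journey E lam u v.

Definition is_simple (V : finType) (E : {set {set V}})
  (lam : {set V} -> {fset nat}) : Prop :=
  forall e, e \in E -> #|` lam e| = 1%N.

Definition is_proper (V : finType) (E : {set {set V}})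
  (lam : {set V} -> {fset nat}) : Prop :=
  forall e e', e \in E -> e' \in E -> e != e' -> e :&: e' != set0 ->
    lam e `&` lam e' = fset0.

Definition is_happy (V : finType) (E : {set {set V}})
  (lam : {set V} -> {fset nat}) : Prop :=
  is_proper E lam /\ is_simple E lam.

(* Every contact ({a, b}, t) of G gives two relay vertices of H, one per
   direction. The relay for the direction a -> b is joined to a by an edge
   present only at time 2t and to b by an edge present only at time 2t + 1;
   a tie-breaking summand makes all labels distinct, so H is happy. A strict
   journey x_0, ..., x_k of G at times t_1 < ... < t_k becomes the journey of H
   through the matching relays at times 2t_1 < 2t_1 + 1 < 2t_2 < ... .
   Conversely, a journey of H between vertices of G alternates between vertices
   of G and relays, crosses every relay from its tail to its head, and the
   inequality 2t_i + 1 < 2t_(i+1) between consecutive relays gives back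
   t_i < t_(i+1). *)

From mathcomp Require Import all_boot finmap zify.
Set Implicit Arguments. Unset Strict Implicit. Unset Printing Implicit Defensive.
Local Open Scope fset_scope.

Section TimedPaths.

Variables (V : finType) (E : {set {set V}}) (lam : {set V} -> {fset nat}).

Definition timed_path (x : nat -> V) (t : nat -> nat) (k : nat) : Prop :=
  [/\ 0 < k, {in gtn k.+1 &, injective x},
      forall i, i < k -> [set x i; x i.+1] \in E /\ t i \in lam [set x i; x i.+1]
    & forall i, i.+1 < k -> t i < t i.+1].

Lemma strict_journeyP u v :
  strict_journey E lam u v <->
  exists k x t, [/\ x 0 = u, x k = v & timed_path x t k].
Proof.
split.
  case=> p [ts [size_ts [p_gt0 [up_uniq [last_p [p_steps ts_sorted]]]]]].
  exists (size p), (nth u (u :: p)), (nth 0%N ts); split=> //; first by rewrite -last_nth.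
  split=> //; first by apply/mkseq_uniqP; rewrite mkseq_nth.
  by move=> i i_lt; apply: (sortedP 0%N ts_sorted); rewrite size_ts.
case=> k [x [t [x0 xk [k_gt0 x_inj steps incr]]]].
have up : u :: behead (mkseq x k.+1) = mkseq x k.+1 by rewrite /mkseq /= x0.
have nth_up i : i <= k -> nth u (u :: behead (mkseq x k.+1)) i = x i.
  by move=> i_le; rewrite up nth_mkseq.
have size_p : size (behead (mkseq x k.+1)) = k by rewrite size_behead size_mkseq.
exists (behead (mkseq x k.+1)), (mkseq t k); rewrite size_mkseq size_p.
split=> //; split=> //; split; first by rewrite up; apply/mkseq_uniqP.
split; first by rewrite (last_nth u) size_p nth_up.
split.
  move=> i i_lt; rewrite -[nth u (behead _) i]/(nth u (u :: _) i.+1).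
  by rewrite !nth_up ?nth_mkseq //; [exact: steps | exact: ltnW].
apply/(sortedP 0%N) => i; rewrite size_mkseq => i_lt.
by rewrite !nth_mkseq //; [apply: incr | apply: ltnW].
Qed.

Lemma timed_path_neq x t k i : timed_path x t k -> i < k -> x i != x i.+1.
Proof.
case=> _ x_inj _ _ i_lt; apply/eqP => /x_inj; rewrite !inE.
by move=> /(_ (ltnW i_lt) i_lt) /n_Sn.
Qed.

End TimedPaths.

Lemma double_or_doubleS j : exists i, j = i.*2 \/ j = i.*2.+1.
Proof. by exists j./2; rewrite -{1 3}(odd_double_half j); case: (odd j); [right | left]. Qed.

Lemma ltn_mulD_small K x y r r' : x < y -> r < K -> x * K + r < y * K + r'.
Proof. nia. Qed.

Lemma ltn_mulD_small_leq K x y r r' : r' < K -> x * K + r < y * K + r' -> x <= y.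
Proof. nia. Qed.

Lemma card2_set2 (T : finType) (A : {set T}) a b :
  #|A| = 2 -> a \in A -> b \in A -> a != b -> A = [set a; b].
Proof.
move=> A2 aA bA ab; apply/eqP; rewrite eq_sym eqEcard A2 cards2 ab andbT.
by apply/subsetP => y; rewrite !inE => /orP [] /eqP ->.
Qed.

Definition contacts (V : finType) (E : {set {set V}}) (lam : {set V} -> {fset nat})
  : seq ({set V} * nat) := [seq (e, t) | e <- enum E, t <- lam e].

Notation contact E lam := (seq_sub (contacts E lam)).
Notation dcontact E lam := (contact E lam * bool)%type.

Section RelayGraph.

Variables (V : finType) (E : {set {set V}}) (lam : {set V} -> {fset nat}).

Local Notation D := (dcontact E lam).

Lemma mem_contacts c : c \in contacts E lam = (c.1 \in E) && (c.2 \in lam c.1).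
Proof.
apply/allpairsPdep/andP => [[e [t [eE tl ->]]] | [eE tl]]; first by rewrite mem_enum in eE.
by exists c.1, c.2; rewrite mem_enum; case: c {eE tl} => [e t] in eE tl *.
Qed.

Lemma card_contact : #|{: contact E lam}| = ncontacts E lam.
Proof.
rewrite card_seq_sub; last first.
  apply: allpairs_uniq_dep; [exact: enum_uniq | by move=> e _; exact: fset_uniq |].
  by move=> [e t] [e' t'] _ _ [-> ->].
by rewrite size_allpairs_dep /ncontacts -big_enum /= sumnE big_map.
Qed.

Definition cedge (g : D) : {set V} := (ssval g.1).1.
Definition ctime (g : D) : nat := (ssval g.1).2.

(* The flag of a directed contact [g] selects which endpoint of [cedge g] is
   its head: the picked endpoint if the flag is false, the other one if it is true. *)
Definition is_head (w : V) (g : D) : bool := ([pick y in cedge g] == Some w) (+) g.2.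

(* A walk through the relay vertex of [g] enters at time [2 t] and leaves at
   time [2 t + 1]; the rank summand makes all labels pairwise distinct. *)
Definition stamp (w : V) (g : D) : nat := (ctime g).*2 + is_head w g.
Definition label (w : V) (g : D) : nat := stamp w g * #|{: D}| + enum_rank g.

Definition link (q : D * V) : {set V + D} := [set inl q.2; inr q.1].

Definition relay_edges : {set {set V + D}} :=
  [set link q | q in [set q : D * V | q.2 \in cedge q.1]].

Definition relay_times (S : {set V + D}) : {fset nat} :=
  if [pick q | S == link q] is Some q then [fset label q.2 q.1] else fset0.

Lemma cedge_ctime_contact g : cedge g \in E /\ ctime g \in lam (cedge g).
Proof. by have := ssvalP g.1; rewrite mem_contacts => /andP. Qed.

Lemma link_inj : injective link.
Proof.
move=> [g w] [g' w'] /setP eq_link.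
have := eq_link (inl w); have := eq_link (inr g); rewrite !inE /= !eqxx /=.
by move=> /esym/eqP [->] /esym/orP [/eqP [->] | /eqP].
Qed.

Lemma relay_timesE q : relay_times (link q) = [fset label q.2 q.1].
Proof.
rewrite /relay_times; case: pickP => [q' /eqP /link_inj -> // | no_q].
by have := no_q q; rewrite eqxx.
Qed.

Lemma link_relay_edge (g : D) w :
  w \in cedge g -> link (g, w) \in relay_edges /\ label w g \in relay_times (link (g, w)).
Proof. by move=> wg; rewrite relay_timesE in_fset1 eqxx; split=> //; apply: imset_f; rewrite inE. Qed.

Lemma relay_edge_link S : S \in relay_edges -> exists2 q : D * V, q.2 \in cedge q.1 & S = link q.
Proof. by case/imsetP => q; rewrite inE; exists q. Qed.

Lemma relay_step a (h : D) s :
  [set inl a; inr h] \in relay_edges -> s \in relay_times [set inl a; inr h] ->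
  a \in cedge h /\ s = label a h.
Proof.
case/relay_edge_link => q qE eq_q; have q_ha : q = (h, a) by apply: link_inj.
by rewrite q_ha in qE; rewrite -[[set _; _]]/(link (h, a)) relay_timesE in_fset1 => /eqP.
Qed.

Lemma label_ltn_stamp w g w' g' : stamp w g < stamp w' g' -> label w g < label w' g'.
Proof.
by move=> lt_st; apply: ltn_mulD_small (ltn_ord (enum_rank g)).
Qed.

Lemma label_ltn_stamp_leq w g w' g' : label w g < label w' g' -> stamp w g <= stamp w' g'.
Proof.
exact: ltn_mulD_small_leq (ltn_ord (enum_rank g')).
Qed.

Lemma exists_dcontact e t a :
  e \in E -> t \in lam e -> a \in e -> exists g : D, [/\ cedge g = e, ctime g = t & ~~ is_head a g].
Proof.
move=> eE tl _; have c_in : (e, t) \in contacts E lam by rewrite mem_contacts eE.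
by exists (SeqSub c_in, [pick y in e] == Some a); rewrite /is_head /cedge /= addbb.
Qed.

Hypothesis tgE : is_tgraph E lam.

Lemma card_cedge g : #|cedge g| = 2.
Proof. by case: tgE => card2 _; apply/card2/(cedge_ctime_contact g).1. Qed.

Lemma is_head_opp g a b :
  a \in cedge g -> b \in cedge g -> a != b -> is_head b g = ~~ is_head a g.
Proof.
move=> ag bg ab; have eg := card2_set2 (card_cedge g) ag bg ab.
rewrite /is_head; case: pickP => [y | /(_ a)]; last by rewrite ag.
have neq_ab : (Some a == Some b) = false by apply/eqP => -[/eqP]; rewrite (negbTE ab).
rewrite eg !inE => /orP [] /eqP ->; by rewrite eqxx ?neq_ab 1?eq_sym ?neq_ab /= ?negbK.
Qed.


Lemma label_inj g g' w w' :
  w \in cedge g -> w' \in cedge g' -> label w g = label w' g' -> (g, w) = (g', w').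
Proof.
move=> wg w'g' eq_lab.
have eq_rank : enum_rank g = enum_rank g' :> nat.
  by have := congr1 (modn^~ #|{: D}|) eq_lab; rewrite !modnMDl !modn_small.
have eq_g : g = g' by apply/enum_rank_inj/val_inj.
subst g'; have eq_stamp : stamp w g = stamp w' g.
  by case: (ltngtP (stamp w g) (stamp w' g)) => // /label_ltn_stamp; rewrite eq_lab ltnn.
have [-> // | ww'] := eqVneq w w'; move: eq_stamp.
by rewrite /stamp (is_head_opp wg w'g' ww') => /addnI; case: (is_head w g).
Qed.

Lemma card_relay_edges : #|relay_edges| = 4 * ncontacts E lam.
Proof.
rewrite /relay_edges card_imset; last exact: link_inj.
rewrite -sum1_card (eq_bigl (fun q : D * V => xpredT q.1 && (q.2 \in cedge q.1))); last first.
  by move=> q; rewrite inE.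
rewrite -(pair_big_dep xpredT (fun g w => w \in cedge g) (fun _ _ => 1)) /=.
under eq_bigr => g _ do rewrite sum1_card card_cedge.
by rewrite sum_nat_const card_prod card_bool card_contact; lia.
Qed.

Lemma relay_tgraph : is_tgraph relay_edges relay_times.
Proof.
split=> _ /relay_edge_link [q _ ->]; first by rewrite cards2.
by rewrite relay_timesE -cardfs_eq0 cardfs1.
Qed.

Lemma relay_happy : is_happy relay_edges relay_times.
Proof.
split=> [S S' /relay_edge_link [q qE ->] /relay_edge_link [q' q'E ->] qq' _ | _ /relay_edge_link [q _ ->]].
  apply/fsetP => s; rewrite in_fsetI !relay_timesE !in_fset1 in_fset0.
  apply/negP => /andP [/eqP -> /eqP eq_lab].
  by move: qq'; case: q q' qE q'E eq_lab => [g w] [g' w'] /= wg w'g' /(label_inj wg w'g') [-> ->]; rewrite eqxx.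
by rewrite relay_timesE cardfs1.
Qed.


Lemma exists_orientation x t k : timed_path E lam x t k ->
  exists g : nat -> D, forall i, i < k ->
    [/\ cedge (g i) = [set x i; x i.+1], ctime (g i) = t i,
        ~~ is_head (x i) (g i) & is_head (x i.+1) (g i)].
Proof.
move=> xt; case: (xt) => k_gt0 _ steps _.
have [g0 _] : exists g0 : D, True.
  have [eE tl] := steps 0 k_gt0.
  by have [g0 _] := exists_dcontact eE tl (set21 _ _); exists g0.
pose P i h := [&& cedge h == [set x i; x i.+1], ctime h == t i & ~~ is_head (x i) h].
exists (fun i => odflt g0 [pick h | P i h]) => i i_lt.
have [eE tl] := steps i i_lt.
case: pickP => [h /and3P [/eqP eh /eqP th tail] | no_h]; last first.
  have [h [eh th tail]] := exists_dcontact eE tl (set21 _ _).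
  by have := no_h h; rewrite /P eh th tail !eqxx.
rewrite /= eh th; split=> //.
by rewrite (is_head_opp _ _ (timed_path_neq xt i_lt)) ?eh ?set21 ?set22.
Qed.

Lemma relay_path_of_path x t k : timed_path E lam x t k ->
  exists (X : nat -> V + D) (T : nat -> nat),
    [/\ X 0 = inl (x 0), X k.*2 = inl (x k) & timed_path relay_edges relay_times X T k.*2].
Proof.
move=> xt; have [g gP] := exists_orientation xt; case: xt => k_gt0 x_inj _ incr.
pose X j : V + D := if odd j then inr (g j./2) else inl (x j./2).
pose T j := label (x (uphalf j)) (g j./2).
have X_even i : X i.*2 = inl (x i) by rewrite /X odd_double doubleK.
have X_odd i : X i.*2.+1 = inr (g i) by rewrite /X /= odd_double uphalf_double.
have T_even i : T i.*2 = label (x i) (g i) by rewrite /T uphalf_double doubleK.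
have T_odd i : T i.*2.+1 = label (x i.+1) (g i) by rewrite /T /= uphalf_double doubleK.
exists X, T; split=> //; split.
- by rewrite double_gt0.
- move=> j j'; have [i [-> | ->]] := double_or_doubleS j;
    have [i' [-> | ->]] := double_or_doubleS j'; rewrite !inE => j_le j'_le;
    rewrite ?X_even ?X_odd // => -[eq_ii'].
  + by congr _.*2; apply: x_inj; rewrite // inE; lia.
  + have [ei _ tail_i _] := gP i ltac:(lia); have [ei' _ tail_i' _] := gP i' ltac:(lia).
    suff eq_x : x i = x i' by congr _.*2.+1; apply: x_inj; rewrite // inE; lia.
    apply/eqP; apply: contraNT tail_i' => neq_x.
    have xi'_in : x i' \in cedge (g i) by rewrite eq_ii' ei' set21.
    by rewrite -eq_ii' (is_head_opp _ xi'_in neq_x) ?tail_i // ei set21.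
- move=> j; have [i [-> | ->]] := double_or_doubleS j => j_lt;
    have [ei _ _ _] := gP i ltac:(lia).
  + by rewrite X_even X_odd T_even; apply: link_relay_edge; rewrite ei set21.
  + by rewrite X_odd -doubleS X_even T_odd setUC; apply: link_relay_edge; rewrite ei set22.
- move=> j; have [i [-> | ->]] := double_or_doubleS j => j_lt.
  + have [_ _ /negbTE tail head] := gP i ltac:(lia).
    by rewrite T_even T_odd; apply: label_ltn_stamp; rewrite /stamp tail head addn0 addn1.
  + have [_ ti _ head] := gP i ltac:(lia); have [_ ti' /negbTE tail _] := gP i.+1 ltac:(lia).
    rewrite -doubleS T_odd T_even; apply: label_ltn_stamp.
    by rewrite /stamp ti ti' head tail; have := incr i ltac:(lia); lia.
Qed.


Lemma relay_traversal a b h s s' :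
  [set inl a; inr h] \in relay_edges -> s \in relay_times [set inl a; inr h] ->
  [set inr h; inl b] \in relay_edges -> s' \in relay_times [set inr h; inl b] ->
  a != b -> s < s' ->
  [/\ cedge h = [set a; b], ~~ is_head a h, is_head b h, s = label a h & s' = label b h].
Proof.
move=> ahE sa; rewrite setUC => bhE sb ab.
have [ah ->] := relay_step ahE sa; have [bh ->] := relay_step bhE sb.
have opp := is_head_opp ah bh ab.
move=> /label_ltn_stamp_leq; rewrite /stamp opp leq_add2l.
by case: (is_head a h) => //= _; split=> //; apply: card2_set2 (card_cedge h) ah bh ab.
Qed.

Definition is_inl (y : V + D) : bool := if y is inl _ then true else false.

Lemma relay_edge_sides y z : [set y; z] \in relay_edges -> is_inl y != is_inl z.
Proof.
case/relay_edge_link => [[h w]] _ eq_yz.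
have y_in : y \in link (h, w) by rewrite -eq_yz set21.
have z_in : z \in link (h, w) by rewrite -eq_yz set22.
move: y_in z_in eq_yz; rewrite !inE => /orP [] /eqP -> /orP [] /eqP -> // /setP.
- by move=> /(_ (inr h)); rewrite !inE /= eqxx.
- by move=> /(_ (inl w)); rewrite !inE /= eqxx.
Qed.

Lemma relay_path_alternates X T n u :
  timed_path relay_edges relay_times X T n -> X 0 = inl u ->
  forall j, j <= n -> is_inl (X j) = ~~ odd j.
Proof.
case=> _ _ steps _ X0; elim=> [|j IH] j_lt; first by rewrite X0.
have := relay_edge_sides (steps j j_lt).1; rewrite (IH (ltnW j_lt)) /=.
by case: (odd j); case: (is_inl _).
Qed.

Lemma path_of_relay_path X T n u v :
  timed_path relay_edges relay_times X T n -> X 0 = inl u -> X n = inl v ->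
  exists k x t, [/\ x 0 = u, x k = v & timed_path E lam x t k].
Proof.
move=> XT X0 Xn; have alt := relay_path_alternates XT X0.
case: XT => n_gt0 X_inj steps incr.
have n_even : ~~ odd n by rewrite -(alt n (leqnn n)) Xn.
set k := n./2; have n_k : n = k.*2 by rewrite -[LHS]odd_double_half (negbTE n_even).
have [g0 _] : exists g0 : D, True by move: (alt 1 n_gt0); case: (X 1) => // h _; exists h.
pose x i := if X i.*2 is inl a then a else u.
pose g i := if X i.*2.+1 is inr h then h else g0.
have X_even i : i <= k -> X i.*2 = inl (x i).
  by move=> i_le; have := alt i.*2; rewrite odd_double n_k leq_double /x => /(_ i_le); case: (X _).
have X_odd i : i < k -> X i.*2.+1 = inr (g i).
  by move=> i_lt; have := alt i.*2.+1; rewrite /= odd_double n_k ltn_double /g => /(_ i_lt); case: (X _).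
have x_inj : {in gtn k.+1 &, injective x}.
  move=> i i'; rewrite !inE => i_le i'_le eq_x; apply: double_inj; apply: X_inj.
  - by rewrite inE n_k ltnS leq_double.
  - by rewrite inE n_k ltnS leq_double.
  - by rewrite !X_even ?eq_x.
have through i : i < k ->
    [/\ cedge (g i) = [set x i; x i.+1], ~~ is_head (x i) (g i), is_head (x i.+1) (g i),
        T i.*2 = label (x i) (g i) & T i.*2.+1 = label (x i.+1) (g i)].
  move=> i_lt; have [e1 t1] := steps i.*2 ltac:(lia); have [e2 t2] := steps i.*2.+1 ltac:(lia).
  rewrite (X_even i (ltnW i_lt)) (X_odd i i_lt) in e1 t1.
  rewrite (X_odd i i_lt) -doubleS (X_even i.+1 i_lt) in e2 t2.
  apply: relay_traversal e1 t1 e2 t2 _ (incr _ _); last lia.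
  by apply/eqP => /x_inj; rewrite !inE => /(_ (ltnW i_lt) i_lt) /n_Sn.
exists k, x, (fun i => ctime (g i)); split; first by rewrite /x X0.
  by have := X_even k (leqnn k); rewrite -n_k Xn => -[].
split=> //; first by move: n_gt0; rewrite n_k double_gt0.
  by move=> i /through [<- _ _ _ _]; apply: cedge_ctime_contact.
move=> i i_lt; have [_ _ head _ T1] := through i ltac:(lia).
have [_ /negbTE tail _ T2 _] := through i.+1 i_lt.
have := incr i.*2.+1 ltac:(lia); rewrite -doubleS T1 T2 => /label_ltn_stamp_leq.
by rewrite /stamp head tail; lia.
Qed.

Lemma relay_reach_arc u v :
  reach_arc E lam u v <-> reach_arc relay_edges relay_times (inl u) (inl v).
Proof.
rewrite /reach_arc (inj_eq inl_inj) !strict_journeyP.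
split=> -[uv [k [x [t [x0 xk xt]]]]]; split=> //.
  by have [X [T [X0 Xk XT]]] := relay_path_of_path xt; exists k.*2, X, T; rewrite X0 Xk x0 xk.
exact: path_of_relay_path xt x0 xk.
Qed.

End RelayGraph.

Unset Implicit Arguments.

Theorem mainTheorem11 (V : finType) (E : {set {set V}})
  (lam : {set V} -> {fset nat}) :
  is_tgraph E lam ->
  exists (W : finType) (F : {set {set W}}) (mu : {set W} -> {fset nat})
         (sigma : V -> W),
    is_tgraph F mu /\ is_happy F mu /\
        #|W| = (#|V| + 2 * ncontacts E lam)%N /\
        #|F| = (4 * ncontacts E lam)%N /\
        injective sigma /\ forall u v : V,
          reach_arc E lam u v <-> reach_arc F mu (sigma u) (sigma v).
Proof.
move=> tgE; exists (V + dcontact E lam)%type, (relay_edges E lam), (@relay_times V E lam), inl.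
split; first exact: relay_tgraph.
split; first exact: relay_happy.
split; first by rewrite card_sum card_prod card_bool card_contact mulnC.
split; first exact: card_relay_edges.
split; [exact: inl_inj | exact: relay_reach_arc].
Qed.
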